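(* Let $\mathcal{S}$ be a finite set of locations forming a rectangular grid, identified with a set of integer lattice points $\mathcal{S}\subseteq\mathbb{Z}^2$ (grid cells of unit side length), and let $d_E$ denote the Euclidean distance on $\mathbb{R}^2$. Let $\mathcal{G}_1=(\mathcal{S},\mathcal{E}_1)$ be the location policy graph in which each location $\textbf{s}\in\mathcal{S}$ is joined by an edge to each of its (up to) eight closest grid locations, i.e. $\{\textbf{s},\textbf{s}'\}\in\mathcal{E}_1$ iff $\textbf{s}\neq\textbf{s}'$ and $\max(|s_x-s'_x|,|s_y-s'_y|)=1$. Let $\epsilon>0$. If a randomized algorithm $\mathcal{A}$ with input in $\mathcal{S}$ satisfies $\{\epsilon,\mathcal{G}_1\}$-location privacy, then $\mathcal{A}$ satisfies $\epsilon$-Geo-Indistinguishability, i.e. for all $\textbf{s}_i,\textbf{s}_j\in\mathcal{S}$ and every set $Z$ of outputs, $\Pr(\mathcal{A}(\textbf{s}_i)\in Z)\leq e^{\epsilon\, d_E(\textbf{s}_i,\textbf{s}_j)}\Pr(\mathcal{A}(\textbf{s}_j)\in Z)$.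
   Context: A location policy graph is an undirected graph $\mathcal{G}=(\mathcal{S},\mathcal{E})$ whose nodes $\mathcal{S}$ are the possible locations and whose edges $\mathcal{E}$ indicate pairs of locations that must be indistinguishable. Two locations joined by an edge are called 1-neighbors. A randomized algorithm $\mathcal{A}$ taking a location as input satisfies $\{\epsilon,\mathcal{G}\}$-location privacy iff for every set $Z$ of possible outputs and every pair of 1-neighbors $\textbf{s},\textbf{s}'$ in $\mathcal{G}$, $\Pr(\mathcal{A}(\textbf{s})\in Z)\leq e^{\epsilon}\Pr(\mathcal{A}(\textbf{s}')\in Z)$. An algorithm satisfies $\epsilon$-Geo-Indistinguishability iff for all locations $\textbf{s}_i,\textbf{s}_j$ and all output sets $Z$, $\Pr(\mathcal{A}(\textbf{s}_i)\in Z)\leq e^{\epsilon d_E(\textbf{s}_i,\textbf{s}_j)}\Pr(\mathcal{A}(\textbf{s}_j)\in Z)$, where $d_E$ is Euclidean distance. *)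

From HB Require Import structures.
From mathcomp Require Import all_boot all_order all_algebra.
From mathcomp Require Import all_classical all_reals all_analysis.
Set Implicit Arguments. Unset Strict Implicit. Unset Printing Implicit Defensive.
Import Order.TTheory GRing.Theory Num.Theory.
Local Open Scope ring_scope.
Local Open Scope classical_set_scope.

Definition loc := (int * int)%type.

Definition rect_grid (x0 x1 y0 y1 : int) : set loc :=
  [set s | (x0 <= s.1 <= x1) && (y0 <= s.2 <= y1)].

Definition G1_edge (s s' : loc) : bool :=
  (s != s') && (Num.max `|s.1 - s'.1| `|s.2 - s'.2| == 1).

Definition dE (R : realType) (s s' : loc) : R :=
  Num.sqrt (((s.1 - s'.1)%:~R) ^+ 2 + ((s.2 - s'.2)%:~R) ^+ 2).

(* A randomized algorithm with input in loc and outputs in a measurable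
   space T: each input is mapped to a probability distribution on T. *)

Definition location_privacy (R : realType) (d : measure_display)
  (T : measurableType d) (eps : R) (S : set loc) (G : loc -> loc -> bool)
  (A : loc -> probability T R) : Prop :=
  forall s s', S s -> S s' -> G s s' ->
  forall Z : set T, measurable Z ->
    (A s Z <= (expR eps)%:E * A s' Z)%E.

Definition geo_ind (R : realType) (d : measure_display)
  (T : measurableType d) (eps : R) (S : set loc)
  (A : loc -> probability T R) : Prop :=
  forall si sj, S si -> S sj ->
  forall Z : set T, measurable Z ->
    (A si Z <= (expR (eps * dE R si sj))%:E * A sj Z)%E.

(** Two locations at Chebyshev distance n inside a rectangle are joined by a
    path of n king moves that stays in the rectangle: step each coordinate
    one unit towards the target until it is reached. Location privacy costs a
    factor e^eps per edge, hence e^(eps n) along the path, and the Chebyshev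
    distance is at most the Euclidean one. *)

From HB Require Import structures.
From mathcomp Require Import all_boot all_order all_algebra.
From mathcomp Require Import all_classical all_reals all_analysis.
From mathcomp Require Import zify.
Set Implicit Arguments. Unset Strict Implicit. Unset Printing Implicit Defensive.
Import Order.TTheory GRing.Theory Num.Theory.
Local Open Scope ring_scope.

Section PrivacyAlongPaths.
Variables (R : realType) (d : measure_display) (T : measurableType d).
Variables (eps : R) (S : set loc) (G : rel loc) (A : loc -> probability T R).
Hypothesis privacy : location_privacy eps S G A.

Lemma location_privacy_path s p : S s -> {in p, forall x, S x} -> path G s p ->
  forall Z : set T, measurable Z ->
  (A s Z <= (expR (eps * (size p)%:R))%:E * A (last s p) Z)%E.
Proof.
move=> Ss Sp sp Z mZ; elim: p s Ss Sp sp => [|y p IHp] s Ss Sp /=.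
  by rewrite mulr0 expR0 mul1e.
case/andP=> Gsy yp; have Sy := Sp y (mem_head y p).
apply: le_trans (privacy Ss Sy Gsy mZ) _.
rewrite -natr1 mulrDr mulr1 addrC expRD EFinM -muleA lee_wpmul2l //.
by apply: IHp => // x px; apply: Sp; rewrite inE px orbT.
Qed.

End PrivacyAlongPaths.

Definition step_toward (a b : int) : int :=
  if a < b then a + 1 else if b < a then a - 1 else a.

Variant step_toward_spec (a b : int) : int -> Prop :=
  | StepUp of a < b : step_toward_spec a b (a + 1)
  | StepDown of b < a : step_toward_spec a b (a - 1)
  | StepStay of a = b : step_toward_spec a b a.

Lemma step_towardP a b : step_toward_spec a b (step_toward a b).
Proof.
rewrite /step_toward; case: ltgtP => [ab|ba|->]; by constructor.
Qed.

Definition king_step (s t : loc) : loc :=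
  (step_toward s.1 t.1, step_toward s.2 t.2).

Definition cheb_dist (s t : loc) : nat :=
  maxn `|s.1 - t.1|%N `|s.2 - t.2|%N.

Lemma king_step_rect_grid x0 x1 y0 y1 s t :
  rect_grid x0 x1 y0 y1 s -> rect_grid x0 x1 y0 y1 t ->
  rect_grid x0 x1 y0 y1 (king_step s t).
Proof.
rewrite /rect_grid /= => Ss St.
by case: step_towardP; case: step_towardP; lia.
Qed.

Lemma G1_edge_king_step s t : s != t -> G1_edge s (king_step s t).
Proof.
case: s t => [a b] [a' b']; rewrite /G1_edge !xpair_eqE /= negb_and.
by case: step_towardP; case: step_towardP; lia.
Qed.

Lemma cheb_dist_king_step s t : cheb_dist (king_step s t) t = (cheb_dist s t).-1.
Proof. by rewrite /cheb_dist /=; case: step_towardP; case: step_towardP; lia. Qed.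

Lemma cheb_dist_eq0 s t : (cheb_dist s t == 0)%N = (s == t).
Proof.
case: s t => [a b] [a' b']; rewrite /cheb_dist /= xpair_eqE.
apply/eqP/andP; lia.
Qed.

Lemma king_path x0 x1 y0 y1 s t :
  rect_grid x0 x1 y0 y1 s -> rect_grid x0 x1 y0 y1 t ->
  exists p, [/\ path G1_edge s p, last s p = t,
    {in p, forall x, rect_grid x0 x1 y0 y1 x} & size p = cheb_dist s t].
Proof.
move=> + St; move: {2}(cheb_dist s t) (erefl (cheb_dist s t)) => n.
elim: n s => [|n IHn] s dst Ss.
  by exists [::]; split => //=; apply/eqP; rewrite -cheb_dist_eq0 dst.
have st : s != t by rewrite -cheb_dist_eq0 dst.
have Sk : rect_grid x0 x1 y0 y1 (king_step s t) by exact: king_step_rect_grid.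
have dk : cheb_dist (king_step s t) t = n by rewrite cheb_dist_king_step dst.
have [p [kp lp Sp sp]] := IHn _ dk Sk.
exists (king_step s t :: p); split => //=.
- by rewrite G1_edge_king_step.
- by move=> x; rewrite inE => /orP[/eqP->|/Sp].
- by rewrite sp dk dst.
Qed.

Lemma norm_le_sqrt_sum_sqr (F : rcfType) (x y : F) :
  `|x| <= Num.sqrt (x ^+ 2 + y ^+ 2).
Proof. by rewrite -sqrtr_sqr ler_wsqrtr // lerDl sqr_ge0. Qed.

Lemma cheb_dist_le_dE (R : realType) s t : (cheb_dist s t)%:R <= dE R s t.
Proof.
rewrite /cheb_dist /dE /maxn; case: ifP => _; rewrite natr_absz intr_norm.
- by rewrite [X in _ <= Num.sqrt X]addrC norm_le_sqrt_sum_sqr.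
- exact: norm_le_sqrt_sum_sqr.
Qed.

Theorem theorem1 (R : realType) (d : measure_display) (T : measurableType d)
  (x0 x1 y0 y1 : int) (eps : R) (A : loc -> probability T R) :
  0 < eps ->
  location_privacy eps (rect_grid x0 x1 y0 y1) G1_edge A ->
  geo_ind eps (rect_grid x0 x1 y0 y1) A.
Proof.
move=> eps_gt0 privacy si sj Si Sj Z mZ.
have [p [ep lp Sp sp]] := king_path Si Sj.
apply: le_trans (location_privacy_path privacy Si Sp ep mZ) _.
rewrite lp sp lee_wpmul2r // lee_fin ler_expR ler_pM2l //.
exact: cheb_dist_le_dE.
Qed.
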